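(* For every $\varphi\in\mathcal{L}_{\mathrm{CL}^{\mathrm{FI}}}$: $\vdash_{\mathrm{CL}^{\mathrm{FI}}}\varphi$ if and only if $\varphi$ is true at every state of every playable coalition model.
   Context: $N=\{1,\dots,n\}$ is a finite set of agents, $\mathrm{Prop}$ a countable set of atoms. $\mathcal{L}_{\mathrm{CL}}$: $\varphi ::= p\mid\neg\varphi\mid(\varphi\wedge\psi)\mid[C]\varphi$ ($C\subseteq N$); $\mathcal{L}_{\mathrm{CL}^{\mathrm{FI}}}$ additionally has the primitive $\mathrm{FI}_C(\varphi)$. Semantics: a coalition model is $\mathcal{M}=(W,E,V)$, $W$ nonempty, $E_w(C)\subseteq\mathcal{P}(W)$, $V:\mathrm{Prop}\to\mathcal{P}(W)$; Boolean clauses classical; $\mathcal{M},w\models[C]\varphi$ iff $[\![\varphi]\!]_{\mathcal{M}}=\{u\mid\mathcal{M},u\models\varphi\}\in E_w(C)$; $\mathcal{M},w\models\mathrm{FI}_C(\varphi)$ iff $[\![\varphi]\!]_{\mathcal{M}}\notin E_w(C)$ and $[\![\neg\varphi]\!]_{\mathcal{M}}\notin E_w(C)$. Playability of $E_w$: for all $C,D\subseteq N$, $X,Y\subseteq W$: $\emptyset\notin E_w(C)$; $W\in E_w(C)$; $X\in E_w(C)$, $X\subseteq Y$ imply $Y\in E_w(C)$; $C\cap D=\emptyset$, $X\in E_w(C)$, $Y\in E_w(D)$ imply $X\cap Y\in E_w(C\cup D)$; $X\notin E_w(\emptyset)$ iff $W\setminus X\in E_w(N)$; the model is playable if each $E_w$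 is. Proof system: Coalition Logic $\mathrm{CL}$ (Pauly) has all propositional tautologies; $\neg[C]\bot$; $[C]\top$; $\neg[\emptyset]\neg\varphi\to[N]\varphi$; $[C](\varphi\wedge\psi)\to[C]\varphi$; $[C_1]\varphi_1\wedge[C_2]\varphi_2\to[C_1\cup C_2](\varphi_1\wedge\varphi_2)$ for disjoint $C_1,C_2$; modus ponens; and rule RE: from $\varphi\leftrightarrow\psi$ infer $[C]\varphi\leftrightarrow[C]\psi$. $\mathrm{CL}^{\mathrm{FI}}$ is these schemes and rules over $\mathcal{L}_{\mathrm{CL}^{\mathrm{FI}}}$ plus the axiom $\mathrm{FI}_C(\varphi)\leftrightarrow(\neg[C]\varphi\wedge\neg[C]\neg\varphi)$. *)

From mathcomp Require Import all_boot.
Set Implicit Arguments.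
Unset Strict Implicit.
Unset Printing Implicit Defensive.

(* Agents N = 'I_n (n agents), coalitions C : {set 'I_n}, atoms Prop = nat. *)

Inductive form (n : nat) : Type :=
  | Atom : nat -> form n
  | Neg : form n -> form n
  | And : form n -> form n -> form n
  | Box : {set 'I_n} -> form n -> form n
  | FI : {set 'I_n} -> form n -> form n.

Arguments Atom {n}.

Definition Imp n (a b : form n) : form n := Neg (And a (Neg b)).
Definition Iff n (a b : form n) : form n := And (Imp a b) (Imp b a).
Definition Top n : form n := Neg (And (Atom 0) (Neg (Atom 0))).
Definition Bot n : form n := Neg (Top n).

(* Propositional evaluation where atoms and modal formulas ([C]phi, FI_C phi)
   are treated as propositional variables, valued by v. *)
Fixpoint peval n (v : form n -> bool) (f : form n) : bool :=
  match f with
  | Atom p => v (Atom p)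
  | Neg a => ~~ peval v a
  | And a b => peval v a && peval v b
  | Box C a => v (Box C a)
  | FI C a => v (FI C a)
  end.

Definition tautology n (f : form n) : Prop := forall v, peval v f = true.

Inductive provable (n : nat) : form n -> Prop :=
  | Ax_taut f : tautology f -> provable f
  | Ax_nobot C : provable (Neg (Box C (Bot n)))
  | Ax_top C : provable (Box C (Top n))
  | Ax_Nmax f : provable (Imp (Neg (Box set0 (Neg f))) (Box setT f))
  | Ax_mono C f g : provable (Imp (Box C (And f g)) (Box C f))
  | Ax_superadd (C1 C2 : {set 'I_n}) f1 f2 : [disjoint C1 & C2] ->
      provable (Imp (And (Box C1 f1) (Box C2 f2)) (Box (C1 :|: C2) (And f1 f2)))
  | Ax_FI C f : provable (Iff (FI C f) (And (Neg (Box C f)) (Neg (Box C (Neg f)))))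
  | R_MP f g : provable f -> provable (Imp f g) -> provable g
  | R_RE C f g : provable (Iff f g) -> provable (Iff (Box C f) (Box C g)).

Record model (n : nat) : Type := Model {
  st : Type;
  st_inhabited : inhabited st;
  eff : st -> {set 'I_n} -> (st -> Prop) -> Prop;
  val : nat -> st -> Prop
}.

Arguments st {n}.
Arguments st_inhabited {n}.
Arguments eff {n}.
Arguments val {n}.

Fixpoint sat n (M : model n) (w : st M) (f : form n) : Prop :=
  match f with
  | Atom p => val M p w
  | Neg a => ~ @sat n M w a
  | And a b => @sat n M w a /\ @sat n M w b
  | Box C a => eff M w C (fun u => @sat n M u a)
  | FI C a => ~ eff M w C (fun u => @sat n M u a) /\
              ~ eff M w C (fun u => ~ @sat n M u a)
  end.

Arguments sat {n} M w f.

Definition playable_at n (M : model n) (w : st M) : Prop :=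
  [/\ (forall C, ~ eff M w C (fun _ => False)),
      (forall C, eff M w C (fun _ => True)),
      (forall C (X Y : st M -> Prop),
          (forall x, X x -> Y x) -> eff M w C X -> eff M w C Y),
      (forall (C D : {set 'I_n}) (X Y : st M -> Prop), [disjoint C & D] ->
          eff M w C X -> eff M w D Y -> eff M w (C :|: D) (fun x => X x /\ Y x)) &
      (forall X : st M -> Prop,
          ~ eff M w set0 X <-> eff M w setT (fun x => ~ X x))].

Definition playable n (M : model n) : Prop := forall w : st M, playable_at w.

(* Soundness: each axiom is valid at a playable state (Nmax by the duality
   X \notin E(∅) <-> W \ X \in E(N)), and RE preserves validity because
   equivalent formulas have equal truth sets.
   Completeness: the canonical model lives on maximal consistent sets. For a
   coalition C <> N, X is effective for C at G iff X contains the truth set of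
   some phi with [C]phi in G; effectivity for N is defined as the dual of
   effectivity for the empty coalition, so that the truth lemma for [N] is
   exactly the axiom ~[∅]~phi -> [N]phi. FI_C needs nothing new since the FI
   axiom defines it from [C]. A formula lying in every maximal consistent set
   is provable by the Lindenbaum lemma. *)

From mathcomp Require Import all_boot.
From Stdlib Require Import Classical ClassicalEpsilon.
From Stdlib Require List.

Set Implicit Arguments.
Unset Strict Implicit.
Unset Printing Implicit Defensive.

Section Derivability.

Variable n : nat.
Implicit Types (a b c g : form n) (G : form n -> Prop) (l : list (form n)).

Fixpoint and_list l : form n :=
  match l with nil => Top n | cons a l => And a (and_list l) end.

Lemma peval_and_list v l : peval v (and_list l) = all (peval v) l.
Proof. by elim: l => [|a l /= ->] //=; case: (v (Atom 0)). Qed.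

Lemma peval_imp v a b : peval v (Imp a b) = peval v a ==> peval v b.
Proof. by rewrite /= negb_and negbK implybE. Qed.

Lemma provable_taut_mp a b :
  (forall v, peval v a -> peval v b) -> provable a -> provable b.
Proof.
move=> ab /R_MP; apply; apply: Ax_taut => v /=.
by case E: (peval v a); rewrite ?(ab v E).
Qed.

Lemma provable_taut_mp2 a b c :
  (forall v, peval v a -> peval v b -> peval v c) ->
  provable a -> provable b -> provable c.
Proof.
move=> abc pa pb; apply: (@provable_taut_mp (And a b)) => [v /= /andP[]|].
  exact: abc.
apply: R_MP pb (R_MP pa (Ax_taut _)) => v /=.
by case: (peval v a); case: (peval v b).
Qed.

Definition derivable_from G g :=
  exists2 l, List.Forall G l & provable (Imp (and_list l) g).

Definition consistent G := ~ derivable_from G (Bot n).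

Definition extend G g : form n -> Prop := fun x => G x \/ x = g.

Definition maximal_consistent G :=
  consistent G /\ forall g, consistent (extend G g) -> G g.

Lemma derivable_from_mono G G' g :
  (forall x, G x -> G' x) -> derivable_from G g -> derivable_from G' g.
Proof. by move=> GG' [l /(List.Forall_impl _ GG') Gl pl]; exists l. Qed.

Lemma derivable_from_provable G g : provable g -> derivable_from G g.
Proof.
move=> pg; exists nil; first exact: List.Forall_nil.
by apply: provable_taut_mp pg => v /= ->; rewrite andbF.
Qed.

Lemma derivable_from_mem G g : G g -> derivable_from G g.
Proof.
move=> Gg; exists [:: g]; first by constructor.
by apply: Ax_taut => v /=; case: (peval v g); case: (v (Atom 0)).
Qed.

Lemma derivable_from_taut2 G a b c :
  (forall v, peval v a -> peval v b -> peval v c) ->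
  derivable_from G a -> derivable_from G b -> derivable_from G c.
Proof.
move=> abc [la Gla pa] [lb Glb pb]; exists (la ++ lb).
  by apply/List.Forall_app.
apply: provable_taut_mp2 pa pb => v; rewrite !peval_imp !peval_and_list all_cat.
move=> /implyP ha /implyP hb; apply/implyP => /andP[/ha + /hb]; exact: abc.
Qed.

Lemma Forall_extend_and_list G g l : List.Forall (extend G g) l ->
  exists2 l', List.Forall G l' &
    forall v, peval v (and_list l') -> peval v g -> peval v (and_list l).
Proof.
elim=> [|a {}l Ga _ [l' Gl' imp]]; first by exists nil; [exact: List.Forall_nil|].
case: Ga => [Ga|->].
  by exists (a :: l') => [|v /= /andP[-> /imp]]; first exact: List.Forall_cons.
by exists l' => // v /imp h gv /=; rewrite gv h.
Qed.

Lemma deduction G g b :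
  derivable_from (extend G g) b -> derivable_from G (Imp g b).
Proof.
move=> [l /Forall_extend_and_list[l' Gl' imp] pb]; exists l' => //.
apply: provable_taut_mp pb => v; rewrite !peval_imp.
by move=> /implyP h; apply/implyP => /imp himp; apply/implyP => /himp /h.
Qed.

Lemma provable_of_derivable_from_empty g :
  derivable_from (fun _ => False) g -> provable g.
Proof.
case=> [[|a l] Gl pg]; last by inversion Gl.
by apply: provable_taut_mp pg => v; rewrite peval_imp /=; case: (v (Atom 0)).
Qed.

Section MaximalConsistent.

Variable G : form n -> Prop.
Hypothesis mcG : maximal_consistent G.

Lemma mcs_derivable g : derivable_from G g -> G g.
Proof.
case: mcG => conG maxG dg; apply: maxG => /deduction dng; apply: conG.
by apply: derivable_from_taut2 dg dng => v /= -> /=; case: (v (Atom 0)).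
Qed.

Lemma mcs_provable g : provable g -> G g.
Proof. by move/(derivable_from_provable G)/mcs_derivable. Qed.

Lemma mcs_mp a b : G a -> provable (Imp a b) -> G b.
Proof.
move=> /derivable_from_mem da /(derivable_from_provable G) dab.
apply: mcs_derivable; apply: derivable_from_taut2 da dab => v ha.
by rewrite peval_imp ha.
Qed.

Lemma mcs_neg g : G (Neg g) <-> ~ G g.
Proof.
case: mcG => conG maxG; split=> [Gng Gg|nGg].
  apply: conG; apply: derivable_from_taut2
    (derivable_from_mem Gg) (derivable_from_mem Gng) => v /= -> //.
have dng : derivable_from G (Imp g (Bot n)).
  by apply: deduction; apply: NNPP => /maxG.
apply: mcs_derivable; apply: derivable_from_taut2 (dng) dng => v.
by rewrite peval_imp /=; case: (peval v g); case: (v (Atom 0)).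
Qed.

Lemma mcs_and a b : G (And a b) <-> G a /\ G b.
Proof.
split=> [Gab|[/derivable_from_mem da /derivable_from_mem db]].
  by split; apply: (mcs_mp Gab); apply: Ax_taut => v /=;
    case: (peval v a); case: (peval v b).
by apply: mcs_derivable; apply: derivable_from_taut2 da db => v /= -> ->.
Qed.

Lemma mcs_imp a b : G (Imp a b) <-> (G a -> G b).
Proof.
rewrite mcs_neg mcs_and mcs_neg.
by split=> [nab Ga | ab [/ab Gb]]; [apply: NNPP => nGb; apply: nab | apply].
Qed.

Lemma mcs_iff a b : provable (Iff a b) -> G a <-> G b.
Proof.
move=> pab; split=> [/mcs_mp|/mcs_mp]; apply; apply: provable_taut_mp pab => v /=;
  by case: (peval v a); case: (peval v b).
Qed.

End MaximalConsistent.

End Derivability.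

Section Lindenbaum.

Variable n : nat.

Fixpoint form_tree (f : form n) : GenTree.tree (nat + {set 'I_n}) :=
  match f with
  | Atom p => GenTree.Node 0 [:: GenTree.Leaf (inl p)]
  | Neg a => GenTree.Node 1 [:: form_tree a]
  | And a b => GenTree.Node 2 [:: form_tree a; form_tree b]
  | Box C a => GenTree.Node 3 [:: GenTree.Leaf (inr C); form_tree a]
  | FI C a => GenTree.Node 4 [:: GenTree.Leaf (inr C); form_tree a]
  end.

Lemma form_tree_inj : injective form_tree.
Proof.
elim=> [p|a IHa|a IHa b IHb|C a IHa|C a IHa] [q|c|c d|D c|D c] //=.
- by case=> ->.
- by case=> /IHa ->.
- by case=> /IHa -> /IHb ->.
- by case=> -> /IHa ->.
- by case=> -> /IHa ->.
Qed.

Definition form_code (f : form n) : nat := pickle (form_tree f).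

Lemma form_code_inj : injective form_code.
Proof. by move=> a b /(pcan_inj pickleK)/form_tree_inj. Qed.

Variable S : form n -> Prop.
Hypothesis conS : consistent S.

Fixpoint lindenbaum_stage (k : nat) : form n -> Prop :=
  match k with
  | 0 => S
  | k.+1 => fun h => lindenbaum_stage k h \/
      (form_code h = k /\ consistent (extend (lindenbaum_stage k) h))
  end.

Lemma lindenbaum_stage_mono k m h :
  k <= m -> lindenbaum_stage k h -> lindenbaum_stage m h.
Proof. by move/subnK <-; elim: (m - k) => [|i IH] //= /IH; left. Qed.

Lemma lindenbaum_stage_consistent k : consistent (lindenbaum_stage k).
Proof.
elim: k => [|k IH] //=.
case: (classic (exists h, form_code h = k /\
                          consistent (extend (lindenbaum_stage k) h))).
  move=> [h [codeh conh]]; apply: contra_not conh; apply: derivable_from_mono.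
  move=> x [|[codex _]]; [by left | by right; apply: form_code_inj; rewrite codex].
move=> noh; apply: contra_not IH; apply: derivable_from_mono => x [] // codex.
by case: noh; exists x.
Qed.

Definition lindenbaum_extension : form n -> Prop :=
  fun h => exists k, lindenbaum_stage k h.

Lemma Forall_lindenbaum_stage l : List.Forall lindenbaum_extension l ->
  exists k, List.Forall (lindenbaum_stage k) l.
Proof.
elim=> [|a {}l [ka Ha] _ [kl Hl]]; first by exists 0.
exists (maxn ka kl); apply: List.Forall_cons.
  exact: lindenbaum_stage_mono (leq_maxl _ _) Ha.
by apply: List.Forall_impl Hl => x; apply: lindenbaum_stage_mono (leq_maxr _ _).
Qed.

Lemma lindenbaum_extension_mcs : maximal_consistent lindenbaum_extension.
Proof.
split.
  move=> [l /Forall_lindenbaum_stage [k Hl] pl].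
  by apply: (@lindenbaum_stage_consistent k); exists l.
move=> g cong; exists (form_code g).+1; right; split => //.
apply: contra_not cong; apply: derivable_from_mono => x [Hx|->]; last by right.
by left; exists (form_code g).
Qed.

Lemma lindenbaum : exists2 G, maximal_consistent G & forall x, S x -> G x.
Proof.
by exists lindenbaum_extension; [exact: lindenbaum_extension_mcs | exists 0].
Qed.

End Lindenbaum.

Lemma disjoint_set0s (T : finType) (A : {set T}) : [disjoint set0 & A].
Proof. by rewrite disjoints_subset sub0set. Qed.

Section ModalReasoning.

Variable n : nat.
Implicit Types (a b : form n) (C : {set 'I_n}).

Lemma provable_box_mono C a b :
  provable (Imp a b) -> provable (Imp (Box C a) (Box C b)).
Proof.
move=> pab; have /(R_RE C) re : provable (Iff a (And b a)).
  apply: provable_taut_mp pab => v; rewrite peval_imp /=.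
  by case: (peval v a); case: (peval v b).
apply: provable_taut_mp2 re (Ax_mono C b a) => v /=.
by case: (v (Box C a)); case: (v (Box C (And b a))).
Qed.

Variable G : form n -> Prop.
Hypothesis mcG : maximal_consistent G.

Lemma mcs_box_mono C a b : G (Box C a) -> provable (Imp a b) -> G (Box C b).
Proof. by move=> Ga /(provable_box_mono C); apply: mcs_mp. Qed.

Lemma mcs_superadd C1 C2 a b : [disjoint C1 & C2] ->
  G (Box C1 a) -> G (Box C2 b) -> G (Box (C1 :|: C2) (And a b)).
Proof.
move=> dC Ga Gb; apply: (mcs_mp mcG _ (Ax_superadd a b dC)).
by apply/(mcs_and mcG).
Qed.

Lemma mcs_box_refutable C a : G (Box C a) -> ~ provable (Imp a (Bot n)).
Proof.
move=> Ga /(mcs_box_mono Ga); apply/(mcs_neg mcG).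
exact: (mcs_provable mcG (Ax_nobot C)).
Qed.

Lemma mcs_box0_and a b :
  G (Box set0 a) -> G (Box set0 b) -> G (Box set0 (And a b)).
Proof. by rewrite -{3}(setU0 set0); apply: mcs_superadd; apply: disjoint_set0s. Qed.

Lemma mcs_box0_and_list l :
  List.Forall (fun x => G (Box set0 x)) l -> G (Box set0 (and_list l)).
Proof.
elim=> [|a {}l Ga _ Gl] /=; first exact: (mcs_provable mcG (Ax_top set0)).
exact: mcs_box0_and.
Qed.

End ModalReasoning.

Section CanonicalModel.

Variable n : nat.
Implicit Types (a b phi : form n) (C : {set 'I_n}).

Record mcs_state := MCState {
  mcs_of :> form n -> Prop;
  state_mcs : maximal_consistent mcs_of }.

Lemma provable_of_states phi : (forall G : mcs_state, G phi) -> provable phi.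
Proof.
move=> allG; apply: NNPP => nphi.
have : consistent (extend (fun _ => False) (Neg phi)).
  move=> /deduction/provable_of_derivable_from_empty pn; apply: nphi.
  apply: provable_taut_mp pn => v; rewrite peval_imp /=.
  by case: (peval v phi); case: (v (Atom 0)).
move=> /lindenbaum[G mcG /(_ (Neg phi) (or_intror erefl))].
by move/(mcs_neg mcG); apply; exact: (allG (MCState mcG)).
Qed.

Lemma provable_imp_of_states a b :
  (forall G : mcs_state, G a -> G b) -> provable (Imp a b).
Proof.
move=> ab; apply: provable_of_states => G.
by apply/(mcs_imp (state_mcs G)); apply: ab.
Qed.

Lemma mcs_box_witness (G : form n -> Prop) C a : maximal_consistent G ->
  G (Box C a) -> exists D : mcs_state, D a.
Proof.
move=> mcG Ga; apply: NNPP => none; apply: (mcs_box_refutable mcG Ga).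
by apply: provable_imp_of_states => D Da; case: none; exists D.
Qed.

Lemma coalitions_eq (n0 : n = 0) C C' : C = C'.
Proof. by apply/setP => i; move: (ltn_ord i); rewrite {2}n0. Qed.

Definition box0 (G : form n -> Prop) : form n -> Prop :=
  fun phi => G (Box set0 phi).

Lemma box0_mcs (n0 : n = 0) (G : form n -> Prop) :
  maximal_consistent G -> maximal_consistent (box0 G).
Proof.
move=> mcG; split=> [[l Gl pl] | g cong].
  exact: (mcs_box_refutable mcG (mcs_box0_and_list mcG Gl)).
suff /(mcs_neg mcG) /(mcs_mp mcG) /(_ (Ax_Nmax g)) : ~ G (Box set0 (Neg g)).
  by rewrite (coalitions_eq n0 setT set0).
move=> Gng; apply: cong.
apply: (derivable_from_taut2 (a := g) (b := Neg g)) => [v /= -> //||];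
  apply: derivable_from_mem; [by right | by left].
Qed.

Definition box0_state (n0 : n = 0) (G : mcs_state) : mcs_state :=
  MCState (box0_mcs n0 (state_mcs G)).

Definition box_eff (G : mcs_state) C (X : mcs_state -> Prop) :=
  exists2 phi, G (Box C phi) & forall D : mcs_state, D phi -> X D.

(* When n = 0 the empty coalition is N, the axiom ~[∅]~phi -> [N]phi makes
   box0 G maximal consistent, and E_G(∅) is the principal ultrafilter at it. *)
Definition canonical_eff (G : mcs_state) C (X : mcs_state -> Prop) : Prop :=
  match n =P 0 with
  | ReflectT n0 => X (box0_state n0 G)
  | ReflectF _ =>
      if C == setT then ~ box_eff G set0 (fun D => ~ X D) else box_eff G C X
  end.

Lemma set0_neqT (n0 : n != 0) : set0 != setT :> {set 'I_n}.
Proof.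
have n_gt0 : 0 < n by rewrite lt0n.
by apply/eqP => /setP /(_ (Ordinal n_gt0)); rewrite !inE.
Qed.

Lemma canonical_eff0 (n0 : n = 0) G C X :
  canonical_eff G C X = X (box0_state n0 G).
Proof.
rewrite /canonical_eff; case: (n =P 0) => [n0'|//].
by rewrite (eq_irrelevance n0' n0).
Qed.

Lemma canonical_eff_neq0 (n0 : n != 0) G C X : canonical_eff G C X =
  if C == setT then ~ box_eff G set0 (fun D => ~ X D) else box_eff G C X.
Proof. by rewrite /canonical_eff; case: (n =P 0) => [n0'|//]; move/eqP: n0. Qed.

Lemma canonical_eff_mono G C (X Y : mcs_state -> Prop) :
  (forall D, X D -> Y D) -> canonical_eff G C X -> canonical_eff G C Y.
Proof.
move=> XY; rewrite /canonical_eff; case: (n =P 0) => [n0|_]; first exact: XY.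
case: (C == setT) => [nbX [phi Gphi nY]|[phi Gphi phiX]].
  by apply: nbX; exists phi => // D /nY; apply: contra_not (XY D).
by exists phi => // D /phiX /XY.
Qed.

Lemma canonical_eff_ext G C (X Y : mcs_state -> Prop) :
  (forall D, X D <-> Y D) -> canonical_eff G C X <-> canonical_eff G C Y.
Proof. by move=> XY; split; apply: canonical_eff_mono => D /XY. Qed.

Lemma canonical_eff_of_box (G : mcs_state) C phi (X : mcs_state -> Prop) :
  G (Box C phi) -> (forall D : mcs_state, D phi -> X D) -> canonical_eff G C X.
Proof.
move=> Gphi phiX; case: (eqVneq n 0) => [n0|n0].
  rewrite canonical_eff0; apply: phiX.
  by rewrite /= /box0 (coalitions_eq n0 set0 C).
rewrite canonical_eff_neq0 //; case: eqP => [eC|_]; last by exists phi.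
move=> [chi Gchi nX]; rewrite eC in Gphi.
have := mcs_superadd (state_mcs G) (disjoint_set0s setT) Gchi Gphi; rewrite set0U.
move=> /(mcs_box_witness (state_mcs G)) [D].
by move=> /(mcs_and (state_mcs D)) [/nX + /phiX].
Qed.

Lemma mcs_box_canonical_eff (G : mcs_state) C a :
  G (Box C a) <-> canonical_eff G C (fun D => D a).
Proof.
split=> [Ga|]; first exact: canonical_eff_of_box Ga _.
case: (eqVneq n 0) => [n0|n0].
  by rewrite canonical_eff0 /= /box0 (coalitions_eq n0 set0 C).
rewrite canonical_eff_neq0 //; case: eqP => [->|_].
  move=> nbox; apply: (mcs_mp (state_mcs G) _ (Ax_Nmax a)).
  apply/(mcs_neg (state_mcs G)) => Gna; apply: nbox.
  by exists (Neg a) => // D /(mcs_neg (state_mcs D)).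
by move=> [phi Gphi /provable_imp_of_states /(mcs_box_mono (state_mcs G) Gphi)].
Qed.

Lemma canonical_eff_nonempty G C : ~ canonical_eff G C (fun _ => False).
Proof.
move/(canonical_eff_mono (Y := fun D : mcs_state => D (Bot n))).
move/(_ (fun _ => False_ind _)).
move/mcs_box_canonical_eff; apply/(mcs_neg (state_mcs G)).
by apply: (mcs_provable (state_mcs G)); apply: Ax_nobot.
Qed.

Lemma canonical_eff_full G C : canonical_eff G C (fun _ => True).
Proof.
apply: (canonical_eff_mono (X := fun D : mcs_state => D (Top n))) => //.
by apply/mcs_box_canonical_eff; apply: (mcs_provable (state_mcs G)); apply: Ax_top.
Qed.

Lemma canonical_eff_dual G X :
  ~ canonical_eff G set0 X <-> canonical_eff G setT (fun D => ~ X D).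
Proof.
case: (eqVneq n 0) => [n0|n0]; first by rewrite !canonical_eff0.
rewrite !canonical_eff_neq0 // eqxx (negbTE (set0_neqT n0)).
split; apply: contra_not => -[phi Gphi phiX]; exists phi => // D /phiX.
  exact: NNPP.
by move=> XD; apply.
Qed.

Lemma canonical_eff_superadd_setT (n0 : n != 0) G X Y :
  canonical_eff G setT X -> canonical_eff G set0 Y ->
  canonical_eff G setT (fun D => X D /\ Y D).
Proof.
rewrite !canonical_eff_neq0 // eqxx (negbTE (set0_neqT n0)).
move=> nbX [psi Gpsi psiY] [chi Gchi nXY]; apply: nbX; exists (And chi psi).
  exact: (mcs_box0_and (state_mcs G) Gchi Gpsi).
by move=> D /(mcs_and (state_mcs D)) [/nXY nXYD /psiY YD] XD; apply: nXYD.
Qed.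

Lemma canonical_eff_superadd G C1 C2 X Y : [disjoint C1 & C2] ->
  canonical_eff G C1 X -> canonical_eff G C2 Y ->
  canonical_eff G (C1 :|: C2) (fun D => X D /\ Y D).
Proof.
move=> dC; case: (eqVneq n 0) => [n0|n0]; first by rewrite !canonical_eff0.
have box_effP C Z : C != setT -> canonical_eff G C Z -> box_eff G C Z.
  by move=> nT; rewrite canonical_eff_neq0 // (negbTE nT).
case: (eqVneq C1 setT) => [eC1|nC1].
  have eC2 : C2 = set0 by move: dC; rewrite eC1 => /disjoint_setI0; rewrite setTI.
  by rewrite eC1 eC2 setU0; apply: canonical_eff_superadd_setT.
case: (eqVneq C2 setT) => [eC2|nC2].
  have eC1 : C1 = set0.
    by move: dC; rewrite disjoint_sym eC2 => /disjoint_setI0; rewrite setTI.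
  rewrite eC1 eC2 set0U => X1 Y2.
  apply: (canonical_eff_mono (X := fun D => Y D /\ X D)); first by move=> D [].
  exact: canonical_eff_superadd_setT.
move=> /(box_effP _ _ nC1) [phi Gphi phiX] /(box_effP _ _ nC2) [psi Gpsi psiY].
apply: canonical_eff_of_box (mcs_superadd (state_mcs G) dC Gphi Gpsi) _.
by move=> D /(mcs_and (state_mcs D)) [/phiX ? /psiY ?].
Qed.

Definition canonical_model (G0 : mcs_state) : model n :=
  @Model n mcs_state (inhabits G0) canonical_eff (fun p G => G (Atom p)).

Lemma canonical_model_playable G0 : playable (canonical_model G0).
Proof.
move=> G; split.
- exact: canonical_eff_nonempty.
- exact: canonical_eff_full.
- by move=> C X Y; apply: canonical_eff_mono.
- exact: canonical_eff_superadd.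
- exact: canonical_eff_dual.
Qed.

Lemma canonical_model_sat G0 (G : mcs_state) f :
  sat (canonical_model G0) G f <-> G f.
Proof.
elim: f G => [p|a IH|a IHa b IHb|C a IH|C a IH] G /=.
- by [].
- by rewrite (mcs_neg (state_mcs G)) IH.
- by rewrite (mcs_and (state_mcs G)) IHa IHb.
- by rewrite mcs_box_canonical_eff; apply: canonical_eff_ext.
rewrite (mcs_iff (state_mcs G) (Ax_FI C a)) (mcs_and (state_mcs G)).
rewrite !(mcs_neg (state_mcs G)) !mcs_box_canonical_eff.
have negIH (D : mcs_state) : ~ sat (canonical_model G0) D a <-> D (Neg a).
  by rewrite (mcs_neg (state_mcs D)) IH.
by rewrite (canonical_eff_ext G C IH) (canonical_eff_ext G C negIH).
Qed.

Theorem completeness f :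
  (forall M : model n, playable M -> forall w : st M, sat M w f) -> provable f.
Proof.
move=> valid; apply: provable_of_states => G.
exact/(canonical_model_sat G)/valid/canonical_model_playable.
Qed.

End CanonicalModel.

Section Soundness.

Variables (n : nat) (M : model n).
Hypothesis playM : playable M.

Definition truth_value (P : Prop) : bool :=
  if excluded_middle_informative P then true else false.

Lemma truth_valueP P : reflect P (truth_value P).
Proof. by rewrite /truth_value; case: excluded_middle_informative; constructor. Qed.

Lemma peval_truth_value (w : st M) f :
  peval (fun g => truth_value (sat M w g)) f = truth_value (sat M w f).
Proof.
elim: f => [p|a IH|a IHa b IHb|C a|C a] //=.
  by rewrite IH; apply/negP/truth_valueP; apply: contra_not => /truth_valueP.
by rewrite IHa IHb; apply/andP/truth_valueP => -[/truth_valueP ? /truth_valueP ?].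
Qed.

Lemma tautology_sat f : tautology f -> forall w : st M, sat M w f.
Proof.
by move=> taut w; apply/truth_valueP; rewrite -peval_truth_value; apply: taut.
Qed.

Lemma eff_ext (w : st M) C (X Y : st M -> Prop) :
  (forall x, X x <-> Y x) -> eff M w C X <-> eff M w C Y.
Proof. by case: (playM w) => _ _ mono _ _ XY; split; apply: mono => x /XY. Qed.

Theorem soundness f : provable f -> forall w : st M, sat M w f.
Proof.
elim=> {f} [f taut|C|C|f|C f g|C1 C2 f1 f2 dC|C f|f g _ IHf _ IHfg|C f g _ IH] w;
  case: (playM w) => nonempty full mono superadd dual /=.
- exact: tautology_sat taut w.
- by apply: contra_not (nonempty C); apply: mono => x /=; tauto.
- by apply: mono (full C) => x /=; tauto.
- by move=> [/dual nf []]; apply: mono nf => x; apply: NNPP.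
- by move=> [/(mono _ _ (fun u => sat M u f)) h []]; apply: h => x [].
- by move=> [[h1 h2] []]; apply: superadd dC h1 h2.
- by tauto.
- by apply: NNPP => ng; apply: IHfg w (conj (IHf w) ng).
have fg u : sat M u f <-> sat M u g.
  by have [fg gf] := IH u; split=> h; apply: NNPP => nh; [apply: fg | apply: gf].
by rewrite (eff_ext w C fg); tauto.
Qed.

End Soundness.

Theorem mainTheorem18 (n : nat) (f : form n) :
  provable f <-> (forall M : model n, playable M -> forall w : st M, sat M w f).
Proof.
split=> [pf M playM|]; last exact: completeness.
exact: soundness playM f pf.
Qed.
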